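(* Let $\psi\in\mathfrak M^+_\infty$, $b>0$, and let $t\ge1$ be such that $\mu(\psi;t)\ge b$. Then $$\frac12\,\frac{b^2}{(b+1)^2}\,(\eta(t)-t)\le\frac{\psi(t)}{|\psi'(t)|}\le4\Big(1+\frac1b\Big)(\eta(t)-t),$$ where $\psi'(t)=\psi'(t+0)$ denotes the right derivative.
   Context: Let $\mathfrak M$ be the set of positive, continuous, convex-downward functions $\psi(t)$ of $t\ge1$ with $\lim_{t\to\infty}\psi(t)=0$. For $\psi\in\mathfrak M$ put $\eta(t)=\eta(\psi;t)=\psi^{-1}(\psi(t)/2)$, where $\psi^{-1}$ is the inverse function of $\psi$, and $\mu(t)=\mu(\psi;t)=t/(\eta(t)-t)$. Let $\mathfrak M^+_\infty$ be the set of $\psi\in\mathfrak M$ for which $\mu(\psi;t)$ increases monotonically to $\infty$ as $t\to\infty$. *)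

From Stdlib Require Import Reals Lra.
Open Scope R_scope.

(* psi in M: positive, continuous, convex ("convex downward") on [1,+oo),
   with limit 0 at +oo.  Only values on [1,+oo) matter. *)
Definition in_M (psi : R -> R) : Prop :=
  (forall t, 1 <= t -> 0 < psi t) /\
  (forall t, 1 <= t -> forall eps, 0 < eps -> exists delta, 0 < delta /\
      forall s, 1 <= s -> Rabs (s - t) < delta -> Rabs (psi s - psi t) < eps) /\
  (forall x y l, 1 <= x -> 1 <= y -> 0 <= l <= 1 ->
      psi (l * x + (1 - l) * y) <= l * psi x + (1 - l) * psi y) /\
  (forall eps, 0 < eps -> exists T, forall t, T <= t -> Rabs (psi t) < eps).

(* eta t = psi^{-1}(psi t / 2): the (unique, as psi is strictly decreasing)
   point eta t >= 1 with psi (eta t) = psi t / 2. *)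
Definition is_eta (psi eta : R -> R) : Prop :=
  forall t, 1 <= t -> 1 <= eta t /\ psi (eta t) = psi t / 2.

Definition mu (eta : R -> R) (t : R) : R := t / (eta t - t).

Definition in_M_plus_inf (psi eta : R -> R) : Prop :=
  in_M psi /\ is_eta psi eta /\
  (forall s t, 1 <= s -> s <= t -> mu eta s <= mu eta t) /\
  (forall M, exists T, forall t, T <= t -> M <= mu eta t).

Definition right_deriv (psi : R -> R) (t d : R) : Prop :=
  forall eps, 0 < eps -> exists delta, 0 < delta /\
    forall h, 0 < h < delta -> Rabs ((psi (t + h) - psi t) / h - d) < eps.

From Stdlib Require Import Reals.
From Stdlib Require Import Lra.
Open Scope R_scope.

(* Write P = psi t and D = eta t - t > 0, and let d be the right
   derivative of psi at t.  Both bounds follow from two-sided estimates of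
   the difference quotients (psi (t + h) - P) / h for small h > 0:
   - Upper: convexity on [t, eta t], where psi drops from P to P/2, gives
     quotients <= -P/(2D), hence d <= -P/(2D) and P/|d| <= 2D.
   - Lower: monotonicity of mu together with mu(t) >= b yields
     eta(t+h) <= eta t + h(1 + 1/b); as psi is nonincreasing and convex
     beyond eta t, psi (t+h) = 2 psi (eta (t+h)) >= P - h(1 + 1/b) P / D,
     hence d >= -(1 + 1/b) P / D and P/|d| >= bD/(b+1). *)

Definition convex_ge1 (f : R -> R) : Prop :=
  forall x y l, 1 <= x -> 1 <= y -> 0 <= l <= 1 ->
    f (l * x + (1 - l) * y) <= l * f x + (1 - l) * f y.

Lemma in_M_convex psi : in_M psi -> convex_ge1 psi.
Proof. now intros (_ & _ & Hconv & _). Qed.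

Lemma div_le_of_le_mul a b c : 0 < b -> a <= c * b -> a / b <= c.
Proof.
  intros Hb H. apply (Rmult_le_reg_r b); [exact Hb|].
  replace (a / b * b) with a by (field; lra). exact H.
Qed.

Lemma le_div_of_mul_le a b c : 0 < b -> c * b <= a -> c <= a / b.
Proof.
  intros Hb H. apply (Rmult_le_reg_r b); [exact Hb|].
  replace (a / b * b) with a by (field; lra). exact H.
Qed.

Lemma convex_chord f : convex_ge1 f -> forall x y z, 1 <= x -> x < y -> y < z ->
  f y * (z - x) <= (z - y) * f x + (y - x) * f z.
Proof.
  intros Hconv x y z Hx Hxy Hyz.
  set (l := (z - y) / (z - x)).
  assert (Hl : 0 <= l <= 1).
  { unfold l; split.
    - apply Rle_mult_inv_pos; lra.
    - apply div_le_of_le_mul; lra. }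
  specialize (Hconv x z l Hx ltac:(lra) Hl).
  replace (l * x + (1 - l) * z) with y in Hconv by (unfold l; field; lra).
  replace ((z - y) * f x + (y - x) * f z)
    with ((l * f x + (1 - l) * f z) * (z - x)) by (unfold l; field; lra).
  apply Rmult_le_compat_r; lra.
Qed.

(* A positive convex function tending to 0 at +oo is nonincreasing: if it
   increased somewhere, convexity would keep it above that value forever. *)
Lemma convex_vanishing_nonincr f : convex_ge1 f ->
  (forall t, 1 <= t -> 0 < f t) ->
  (forall eps, 0 < eps -> exists T, forall t, T <= t -> Rabs (f t) < eps) ->
  forall x y, 1 <= x -> x <= y -> f y <= f x.
Proof.
  intros Hconv Hpos Hlim x y Hx Hxy.
  destruct (Rle_lt_dec (f y) (f x)) as [H|Hincr]; [exact H|exfalso].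
  destruct (Hlim (f y) (Hpos y ltac:(lra))) as [T HT].
  set (z := Rmax T (y + 1)).
  assert (HTz : T <= z) by apply Rmax_l.
  assert (Hyz : y + 1 <= z) by apply Rmax_r.
  assert (Hxy' : x < y) by (destruct (Req_dec x y); subst; lra).
  assert (Hfz : f z < f y).
  { specialize (HT z HTz). rewrite Rabs_right in HT; [lra|].
    apply Rle_ge, Rlt_le, Hpos; lra. }
  pose proof (convex_chord f Hconv x y z Hx Hxy' ltac:(lra)) as Hch.
  assert (0 < (z - y) * (f y - f x)) by (apply Rmult_lt_0_compat; lra).
  assert (0 < (y - x) * (f y - f z)) by (apply Rmult_lt_0_compat; lra).
  nra.
Qed.

Lemma in_M_nonincr psi : in_M psi -> forall x y, 1 <= x -> x <= y -> psi y <= psi x.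
Proof.
  intros HM. destruct HM as (Hpos & _ & Hconv & Hlim).
  exact (convex_vanishing_nonincr psi Hconv Hpos Hlim).
Qed.

Lemma right_deriv_ge f t d L h0 : right_deriv f t d -> 0 < h0 ->
  (forall h, 0 < h < h0 -> L <= (f (t + h) - f t) / h) -> L <= d.
Proof.
  intros Hd Hh0 HL.
  destruct (Rle_lt_dec L d) as [H|H]; [exact H|exfalso].
  destruct (Hd (L - d) ltac:(lra)) as [delta [Hdelta Hq]].
  set (h := Rmin delta h0 / 2).
  assert (0 < Rmin delta h0) by (apply Rmin_pos; lra).
  assert (Rmin delta h0 <= delta) by apply Rmin_l.
  assert (Rmin delta h0 <= h0) by apply Rmin_r.
  specialize (Hq h ltac:(unfold h; lra)). specialize (HL h ltac:(unfold h; lra)).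
  apply Rabs_def2 in Hq. lra.
Qed.

Lemma right_deriv_opp f t d :
  right_deriv f t d -> right_deriv (fun x => - f x) t (- d).
Proof.
  intros Hd eps Heps. destruct (Hd eps Heps) as [delta [Hdelta Hq]].
  exists delta; split; [exact Hdelta|]. intros h Hh.
  replace ((- f (t + h) - - f t) / h - - d)
    with (- ((f (t + h) - f t) / h - d)) by (field; lra).
  rewrite Rabs_Ropp. exact (Hq h Hh).
Qed.

Lemma right_deriv_le f t d U h0 : right_deriv f t d -> 0 < h0 ->
  (forall h, 0 < h < h0 -> (f (t + h) - f t) / h <= U) -> d <= U.
Proof.
  intros Hd Hh0 HU.
  enough (- U <= - d) by lra.
  apply (right_deriv_ge _ t _ _ h0 (right_deriv_opp f t d Hd) Hh0).
  intros h Hh. specialize (HU h Hh).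
  replace ((- f (t + h) - - f t) / h) with (- ((f (t + h) - f t) / h))
    by (field; lra).
  lra.
Qed.

Section Estimates.

Variables psi eta : R -> R.
Hypothesis HM : in_M psi.
Hypothesis Heta : is_eta psi eta.

Lemma psi_pos t : 1 <= t -> 0 < psi t.
Proof. destruct HM as [Hpos _]. exact (Hpos t). Qed.

(* eta t lies strictly to the right of t, since psi is nonincreasing and
   psi (eta t) = psi t / 2 < psi t. *)
Lemma eta_gt t : 1 <= t -> t < eta t.
Proof.
  intros Ht. destruct (Heta t Ht) as [Hge1 Hhalf].
  destruct (Rle_lt_dec (eta t) t) as [H|H]; [exfalso|exact H].
  pose proof (in_M_nonincr psi HM (eta t) t Hge1 H).
  pose proof (psi_pos t Ht). lra.
Qed.

(* On [t, eta t] psi lies below the chord from (t, P) to (eta t, P/2). *)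
Lemma slope_le_before_eta t h : 1 <= t -> 0 < h < eta t - t ->
  (psi (t + h) - psi t) / h <= - (psi t / (2 * (eta t - t))).
Proof.
  intros Ht Hh. destruct (Heta t Ht) as [_ Hhalf].
  pose proof (convex_chord psi (in_M_convex psi HM) t (t + h) (eta t) Ht
                ltac:(lra) ltac:(lra)) as Hch.
  rewrite Hhalf in Hch.
  apply div_le_of_le_mul; [lra|].
  replace (- (psi t / (2 * (eta t - t))) * h)
    with (- (psi t * h) / (2 * (eta t - t))) by (field; lra).
  apply le_div_of_mul_le; [lra|]. nra.
Qed.

(* Beyond eta t, psi lies above the extension of that chord. *)
Lemma psi_ge_beyond_eta t k : 1 <= t -> 0 < k ->
  psi t / 2 - k * psi t / (2 * (eta t - t)) <= psi (eta t + k).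
Proof.
  intros Ht Hk. destruct (Heta t Ht) as [_ Hhalf].
  pose proof (eta_gt t Ht) as Hgt.
  pose proof (convex_chord psi (in_M_convex psi HM) t (eta t) (eta t + k) Ht
                Hgt ltac:(lra)) as Hch.
  rewrite Hhalf in Hch.
  apply (Rmult_le_reg_r (2 * (eta t - t))); [lra|].
  replace ((psi t / 2 - k * psi t / (2 * (eta t - t))) * (2 * (eta t - t)))
    with (psi t * (eta t - t) - k * psi t) by (field; lra).
  nra.
Qed.

Variable b : R.
Hypothesis Hb : 0 < b.
Hypothesis Hmono : forall s t, 1 <= s -> s <= t -> mu eta s <= mu eta t.

(* Growth of eta: from mu t <= mu s and mu t >= b, the gap eta s - s is at
   most (s/t) D <= D + (s - t)/b. *)
Lemma eta_shift t s : 1 <= t -> b <= mu eta t -> t <= s ->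
  eta s - eta t <= (s - t) * (1 + / b).
Proof.
  intros Ht Hmu Hts.
  pose proof (eta_gt t Ht) as Hgt_t. pose proof (eta_gt s ltac:(lra)) as Hgt_s.
  set (D := eta t - t) in *. set (G := eta s - s).
  assert (HbD : b * D <= t).
  { unfold mu in Hmu. fold D in Hmu.
    apply (Rmult_le_compat_r D) in Hmu; [|unfold D; lra].
    replace (t / D * D) with t in Hmu by (field; unfold D; lra). exact Hmu. }
  assert (HtG : t * G <= s * D).
  { pose proof (Hmono t s Ht Hts) as Hm. unfold mu in Hm. fold D G in Hm.
    apply (Rmult_le_compat_r (D * G)) in Hm; [|unfold D, G; nra].
    replace (t / D * (D * G)) with (t * G) in Hm by (field; unfold D, G; lra).
    replace (s / G * (D * G)) with (s * D) in Hm by (field; unfold G; lra).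
    exact Hm. }
  assert (HG : G <= D + (s - t) / b).
  { apply (Rmult_le_reg_l (b * t)); [nra|].
    replace (b * t * (D + (s - t) / b)) with (b * t * D + t * (s - t))
      by (field; lra).
    assert (0 <= (s - t) * (t - b * D)) by (apply Rmult_le_pos; lra).
    nra. }
  replace ((s - t) * (1 + / b)) with ((s - t) + (s - t) / b) by (field; lra).
  unfold G, D in *. lra.
Qed.

Lemma slope_ge t h : 1 <= t -> b <= mu eta t -> 0 < h ->
  - ((1 + / b) * psi t / (eta t - t)) <= (psi (t + h) - psi t) / h.
Proof.
  intros Ht Hmu Hh.
  pose proof (eta_gt t Ht) as Hgt.
  assert (Hib : 0 < / b) by (apply Rinv_0_lt_compat; lra).
  set (k := h * (1 + / b)).
  assert (Hk : 0 < k) by (unfold k; nra).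
  assert (Hshift : eta (t + h) <= eta t + k).
  { pose proof (eta_shift t (t + h) Ht Hmu ltac:(lra)) as H.
    unfold k. replace (t + h - t) with h in H by ring. lra. }
  destruct (Heta (t + h) ltac:(lra)) as [Hge1 Hhalf].
  pose proof (in_M_nonincr psi HM _ _ Hge1 Hshift) as Hdecr.
  pose proof (psi_ge_beyond_eta t k Ht Hk) as Hbeyond.
  apply le_div_of_mul_le; [exact Hh|].
  replace (- ((1 + / b) * psi t / (eta t - t)) * h)
    with (- (2 * (k * psi t / (2 * (eta t - t))))) by (unfold k; field; lra).
  lra.
Qed.

End Estimates.

Lemma ratio_bounds P D b d : 0 < P -> 0 < D -> 0 < b ->
  - ((1 + / b) * P / D) <= d -> d <= - (P / (2 * D)) ->
  / 2 * (b ^ 2 / (b + 1) ^ 2) * D <= P / Rabs d /\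
  P / Rabs d <= 4 * (1 + / b) * D.
Proof.
  intros HP HD Hb Hlow Hup.
  assert (Hhalf_pos : 0 < P / (2 * D)) by (apply Rdiv_lt_0_compat; lra).
  rewrite Rabs_left by lra.
  set (u := - d) in *.
  assert (Hu : 0 < u) by (unfold u; lra).
  assert (Hu_up : u * (b * D) <= (b + 1) * P).
  { assert (Hu1 : u <= (1 + / b) * P / D) by (unfold u; lra).
    apply (Rmult_le_compat_r (b * D)) in Hu1; [|nra].
    replace ((1 + / b) * P / D * (b * D)) with ((b + 1) * P) in Hu1
      by (field; lra).
    exact Hu1. }
  assert (Hu_low : P <= u * (2 * D)).
  { assert (Hu2 : P / (2 * D) <= u) by (unfold u; lra).
    apply (Rmult_le_compat_r (2 * D)) in Hu2; [|lra].
    replace (P / (2 * D) * (2 * D)) with P in Hu2 by (field; lra).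
    exact Hu2. }
  split.
  - apply le_div_of_mul_le; [exact Hu|].
    apply (Rmult_le_reg_r (2 * (b + 1) ^ 2)); [nra|].
    replace (/ 2 * (b ^ 2 / (b + 1) ^ 2) * D * u * (2 * (b + 1) ^ 2))
      with (b * (u * (b * D))) by (field; lra).
    assert (b * (u * (b * D)) <= b * ((b + 1) * P)) by (apply Rmult_le_compat_l; lra).
    nra.
  - apply div_le_of_le_mul; [exact Hu|].
    assert (Hib : 0 < / b) by (apply Rinv_0_lt_compat; lra).
    nra.
Qed.

Theorem lemma2 (psi eta : R -> R) (b t d : R) :
  in_M_plus_inf psi eta -> 0 < b -> 1 <= t -> b <= mu eta t ->
  right_deriv psi t d ->
  / 2 * (b ^ 2 / (b + 1) ^ 2) * (eta t - t) <= psi t / Rabs d /\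
  psi t / Rabs d <= 4 * (1 + / b) * (eta t - t).
Proof.
  intros [HM [Heta [Hmono _]]] Hb Ht Hmu Hd.
  pose proof (eta_gt psi eta HM Heta t Ht) as Hgt.
  apply ratio_bounds.
  - exact (psi_pos psi HM t Ht).
  - lra.
  - exact Hb.
  - apply (right_deriv_ge psi t d _ 1 Hd ltac:(lra)). intros h Hh.
    exact (slope_ge psi eta HM Heta b Hb Hmono t h Ht Hmu (proj1 Hh)).
  - apply (right_deriv_le psi t d _ (eta t - t) Hd ltac:(lra)).
    intros h Hh. exact (slope_le_before_eta psi eta HM Heta t h Ht Hh).
Qed.
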